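(* Let $D,E$ be Dyck paths with Dyck words $(d_i)_{i\ge1}$ and $(e_i)_{i\ge1}$. Then $D\le E$ in the poset $(\mathcal{D},\le)$ if and only if $d_i\le e_i$ for all $i\ge1$.
   Context: A Dyck path of length $2m$ ($m\ge0$) is a lattice path from $(0,0)$ to $(2m,0)$ with steps $\nearrow=(1,1)$, $\searrow=(1,-1)$ never going below the $x$-axis; write $P(x)$ for its height at abscissa $x$. Its Dyck word is the infinite $0$-$1$ sequence obtained by replacing $\nearrow$ by $1$, $\searrow$ by $0$, and appending infinitely many $0$'s. A cell is a point $(a,b)\in\mathbb{Z}^2$ with $b\ge0$, $a+b$ even (viewed as the tilted square with vertices $(a,b),(a+1,b\pm1),(a+2,b)$). The Dyck shape of $P$ (length $2m$) is $S(P)=\{(a,b): b\ge0,\ a+b\text{ even},\ 0\le a\le 2m-2,\ b+1\le P(a+1)\}$. Cells are adjacent if they differ by $(\pm1,\pm1)$. A ribbon is a nonempty set of cells, connected for adjacency, containing no four cells $(a,b),(a+1,b+1),(a+1,b-1),(a+2,b)$. For Dyck paths $D$ of length $2m$ and $E$ of length $2m+2$, $D\sqsubset E$ means $S(D)\subseteq S(E)$ and $S(E)\setminus S(D)$ is a ribbon. $(\mathcal{D},\le)$ is the set of all Dyck paths of all lengths (including the empty path) with $\le$ the reflexive and transitive closure of $\sqsubset$. *)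

From mathcomp Require Import all_boot all_order all_algebra.
From Stdlib Require Import Relations.Relation_Operators.
Set Implicit Arguments. Unset Strict Implicit. Unset Printing Implicit Defensive.
Import Order.TTheory GRing.Theory Num.Theory.
Local Open Scope ring_scope.

(* A lattice path is a seq bool: true = up-step (1,1), false = down-step (1,-1). *)

Definition height (s : seq bool) (x : nat) : int :=
  \sum_(i < x) (if nth false s i then 1 else -1).

Definition is_dyck (s : seq bool) : bool :=
  (height s (size s) == 0) && all (fun x => 0 <= height s x) (iota 0 (size s).+1).

Definition cell := (int * int)%type.

Definition in_shape (s : seq bool) (c : cell) : bool :=
  [&& 0 <= c.2, (2 %| c.1 + c.2)%Z, 0 <= c.1, c.1 <= (size s)%:Z - 2
    & c.2 + 1 <= height s (absz c.1).+1].

Definition adjacent (c d : cell) : bool :=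
  (`|c.1 - d.1| == 1) && (`|c.2 - d.2| == 1).

(* A ribbon: nonempty, connected for adjacency, no 2x2 block of four cells. *)
Definition ribbon (R : cell -> bool) : Prop :=
  (exists c, R c) /\
  (forall x y, R x -> R y ->
     exists p : seq cell, [/\ path adjacent x p, last x p = y & all R p]) /\
  ~ (exists a b : int,
       [&& R (a, b), R (a + 1, b + 1), R (a + 1, b - 1) & R (a + 2, b)]).

Definition cover (D E : seq bool) : Prop :=
  [/\ is_dyck D, is_dyck E, size E = (size D + 2)%N,
      (forall c, in_shape D c -> in_shape E c)
    & ribbon (fun c => in_shape E c && ~~ in_shape D c)].

Definition dyck_le : seq bool -> seq bool -> Prop := clos_refl_trans _ cover.

(* The i-th letter (i >= 1) of the Dyck word: d_i = nth false D (i-1),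
   padded with infinitely many 0's. *)
Definition dyck_word (s : seq bool) (i : nat) : nat := nat_of_bool (nth false s i.-1).

From Pilot Require Import Defs.
From mathcomp Require Import all_boot all_order all_algebra.
From mathcomp Require Import zify.
From Stdlib Require Import Relations.Relation_Operators.
Set Implicit Arguments. Unset Strict Implicit. Unset Printing Implicit Defensive.
Import Order.TTheory GRing.Theory Num.Theory.
Local Open Scope ring_scope.

(** A cover D ⊏ E never turns a letter 1 of the Dyck word into a 0. If an
    up-step of D at position k were a down-step of E, then either D and E have
    the same height after step k, and the ribbon S(E) \ S(D), which has cells on
    both sides of column k, would miss that column; or E is at least two higher
    there, and S(E) \ S(D) contains the 2x2 block of cells just below the vertex
    of E at abscissa k.
    Conversely, if the word of D is dominated by that of E and D <> E, turning
    the first letter where they differ into an up-step yields a Dyck path that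
    covers D (the new cells form the strip just above D from that column on) and
    is still dominated by E; induction on the length difference concludes. *)

Lemma height0 s : height s 0 = 0.
Proof. by rewrite /height big_ord0. Qed.

Lemma heightS s x : height s x.+1 = height s x + (if nth false s x then 1 else -1).
Proof. by rewrite /height big_ord_recr. Qed.

Lemma heightS_pm1 s x :
  height s x.+1 = height s x + 1 \/ height s x.+1 = height s x - 1.
Proof. by rewrite heightS; case: (nth false s x); [left|right]. Qed.

Definition ups (s : seq bool) (x : nat) : nat := (\sum_(i < x) nth false s i)%N.

Lemma ups0 s : ups s 0 = 0%N.
Proof. by rewrite /ups big_ord0. Qed.

Lemma upsS s x : ups s x.+1 = (ups s x + nth false s x)%N.
Proof. by rewrite /ups big_ord_recr. Qed.

Lemma ups_le s x : (ups s x <= x)%N.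
Proof. by elim: x => [|x IH]; rewrite ?ups0 // upsS; case: (nth false s x); lia. Qed.

Lemma height_ups s x : height s x = 2 * (ups s x)%:Z - x%:Z.
Proof.
elim: x => [|x IH]; first by rewrite height0 ups0.
by rewrite heightS upsS IH; case: (nth false s x) => /=; lia.
Qed.

Lemma height_le s x : height s x <= x%:Z.
Proof. by have := ups_le s x; rewrite height_ups; lia. Qed.

Lemma ups_size_addn s d : ups s (size s + d) = ups s (size s).
Proof.
elim: d => [|d IH]; first by rewrite addn0.
by rewrite addnS upsS IH nth_default ?leq_addr // addn0.
Qed.

Lemma height_size_addn s d : height s (size s + d) = height s (size s) - d%:Z.
Proof. by rewrite !height_ups ups_size_addn; lia. Qed.

Lemma height_eq_prefix D E x :
  (forall i, (i < x)%N -> nth false D i = nth false E i) -> height D x = height E x.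
Proof.
elim: x => [|x IH] eqDE; first by rewrite !height0.
by rewrite !heightS eqDE // IH // => i ix; apply: eqDE; apply: ltnW.
Qed.

Lemma dyck_height_ge0 s x : is_dyck s -> (x <= size s)%N -> 0 <= height s x.
Proof. by move=> /andP[_ /allP H] hx; apply: H; rewrite mem_iota. Qed.

Lemma dyck_height_size s : is_dyck s -> height s (size s) = 0.
Proof. by move=> /andP[/eqP]. Qed.

Lemma dyck_size_ups s : is_dyck s -> size s = (2 * ups s (size s))%N.
Proof. by move=> ds; have := height_ups s (size s); rewrite dyck_height_size //; lia. Qed.

Section Chains.
Variables (T : eqType) (e : rel T).

Lemma path_map_iota (f : nat -> T) n len :
  (forall i, (n <= i < n + len)%N -> e (f i) (f i.+1)) ->
  path e (f n) (map f (iota n.+1 len)) /\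
  last (f n) (map f (iota n.+1 len)) = f (n + len)%N.
Proof.
elim: len n => [|len IH] n H; first by rewrite addn0.
have [|pth lst] := IH n.+1; first by move=> i hi; apply: H; lia.
by rewrite /= -addSnnS pth lst H //; lia.
Qed.

Lemma path_rev_belast (R : pred T) x p :
  symmetric e -> path e x p -> R x -> all R p ->
  [/\ path e (last x p) (rev (belast x p)),
      last (last x p) (rev (belast x p)) = x & all R (rev (belast x p))].
Proof.
move=> e_sym pth Rx Rp; split.
- by rewrite rev_path (eq_path (e' := e)).
- by case: p {pth Rp} => [|y p] //=; rewrite rev_cons last_rcons.
- by rewrite all_rev; apply/allP => z /mem_belast; rewrite inE => /orP[/eqP->|/(allP Rp)].
Qed.

Lemma chain_linked (R : pred T) (f : nat -> T) m n a b :
  symmetric e -> (forall i, (m <= i < n)%N -> e (f i) (f i.+1)) ->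
  (forall i, (m <= i <= n)%N -> R (f i)) ->
  (m <= a <= n)%N -> (m <= b <= n)%N ->
  exists p, [/\ path e (f a) p, last (f a) p = f b & all R p].
Proof.
move=> e_sym step Rf.
wlog le_ab : a b / (a <= b)%N => [wlog ha hb|ha hb].
  have [le_ab|/ltnW le_ba] := leqP a b; first exact: wlog le_ab ha hb.
  have [p [pth lst Rp]] := wlog b a le_ba hb ha.
  have [] := path_rev_belast e_sym pth (Rf b hb) Rp; rewrite lst => pth' lst' Rp'.
  by exists (rev (belast (f b) p)).
have [|pth lst] := path_map_iota (f := f) (n := a) (len := (b - a)%N).
  by move=> i hi; apply: step; lia.
exists (map f (iota a.+1 (b - a))); split=> //; first by rewrite lst subnKC.
by apply/allP => z /mapP[i]; rewrite mem_iota => hi ->; apply: Rf; lia.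
Qed.

End Chains.

Lemma path_adjacent_column (R : pred cell) (K : int) x p :
  path adjacent x p -> R x -> all R p -> x.1 <= K <= (last x p).1 ->
  exists2 z, R z & z.1 = K.
Proof.
elim: p x => [|y p IH] x /=; first by move=> _ Rx _ le; exists x => //; lia.
move=> /andP[adj pth] Rx /andP[Ry Rp] le.
have [<-|neK] := eqVneq x.1 K; first by exists x.
by apply: (IH y) => //; move: adj => /andP[/eqP ? _]; lia.
Qed.

Lemma ribbon_column (R : cell -> bool) (K : int) x y :
  ribbon R -> R x -> R y -> x.1 <= K <= y.1 -> exists2 z, R z & z.1 = K.
Proof.
case=> _ [linked _] Rx Ry le.
have [p [pth lst Rp]] := linked x y Rx Ry.
by apply: path_adjacent_column pth Rx Rp _; rewrite lst.
Qed.

Lemma shape_sub_height_le D E x :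
  is_dyck D -> is_dyck E -> (size D <= size E)%N ->
  (forall c, in_shape D c -> in_shape E c) ->
  (x <= size D)%N -> height D x <= height E x.
Proof.
move=> dD dE DE sub xD; have hE := dyck_height_ge0 dE (leq_trans xD DE).
case: x xD hE => [|a] aD hE; first by rewrite !height0.
have [|hpos] := leP (height D a.+1) 0; first lia.
have aD' : (a.+2 <= size D)%N.
  by move: hpos; rewrite ltn_neqAle aD andbT; apply: contraTneq => ->; rewrite dyck_height_size.
have : in_shape D (a%:Z, height D a.+1 - 1).
  by have := height_ups D a.+1; rewrite /in_shape /=; lia.
by move/sub; rewrite /in_shape /=; lia.
Qed.

Definition word_le (D E : seq bool) : Prop := forall k, nth false D k -> nth false E k.

Section CoverFlip.
Variables (D E : seq bool) (k : nat).
Hypotheses (cDE : Defs.cover D E) (Dk : nth false D k) (Ek : nth false E k = false).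

Lemma cover_flip_lt_size : (k < size D)%N.
Proof. by rewrite ltnNge; apply: contraTN Dk => /(nth_default false) ->. Qed.

Lemma cover_flip_height_le : height D k.+1 <= height E k.+1.
Proof.
have [dD dE sE sub _] := cDE.
by apply: shape_sub_height_le => //; [rewrite sE leq_addr | exact: cover_flip_lt_size].
Qed.

Lemma cover_flip_height_lt : height D k.+1 < height E k.+1.
Proof.
have [dD dE sE sub rib] := cDE; have kD := cover_flip_lt_size.
have hD := heightS D k; have hE := heightS E k; rewrite Dk Ek in hD hE.
have le := cover_flip_height_le; rewrite lt_neqAle le andbT; apply/eqP => eq.
have [a ka] : exists a, k = a.+1.
  by exists k.-1; have := height_le E k; have := dyck_height_ge0 dD (ltnW kD); lia.
pose R c := in_shape E c && ~~ in_shape D c.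
have Rx : R (a%:Z, height E k - 1).
  have := height_ups E k; have := dyck_height_ge0 dD (ltnW kD).
  by rewrite /R /in_shape /= -ka; lia.
have Ry : R ((size D)%:Z, 0).
  have hEend := dyck_height_size dE; rewrite sE addn2 in hEend.
  have hE1 : 0 <= height E (size D).+1 by apply: dyck_height_ge0; rewrite // sE addn2.
  have := heightS_pm1 E (size D).+1; have := height_ups D (size D).
  have := dyck_height_size dD.
  by rewrite /R /in_shape /= sE; lia.
(* Rx lies in column k - 1 and Ry in column size D >= k, but D and E have the
   same height at k + 1, so column k of S(E) \ S(D) is empty. *)
have [|[c b] Rz /= cK] := ribbon_column (K := k%:Z) rib Rx Ry; first by rewrite /=; lia.
have hDend := dyck_height_size dD.
move: Rz; rewrite /R /in_shape cK /=; have := height_ups D k.+1.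
have : k.+1 = size D -> height D k.+1 = 0 by move=> ->.
lia.
Qed.

Lemma cover_flip_height_ge : height E k.+1 <= height D k.+1.
Proof.
have [dD dE sE _ [_ [_ no_block]]] := cDE.
have hD := heightS D k; have hE := heightS E k; rewrite Dk Ek in hD hE.
rewrite leNgt; apply/negP => lt.
have kD := cover_flip_lt_size; have hD0 := dyck_height_ge0 dD (ltnW kD).
have [a ka] : exists a, k = a.+2 by exists (k - 2)%N; have := height_le E k; lia.
apply: no_block; exists a%:Z, (height E k - 2).
rewrite (_ : a%:Z + 1 = a.+1%:Z) 1?(_ : a%:Z + 2 = a.+2%:Z) //; try lia.
have := heightS_pm1 E a.+1; have := heightS_pm1 D a.+1; have := height_ups E k.
by rewrite /in_shape /= sE -ka; lia.
Qed.

End CoverFlip.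

Lemma cover_word_le D E : Defs.cover D E -> word_le D E.
Proof.
move=> cDE k Dk; apply/negPn/negP => /negbTE Ek.
by have := cover_flip_height_lt cDE Dk Ek; rewrite ltNge cover_flip_height_ge.
Qed.

Lemma adjacent_sym : symmetric adjacent.
Proof. by move=> c d; rewrite /adjacent distrC (distrC c.2). Qed.

(* The two appended down-steps bring the raised path back to the axis. *)
Definition raise (s : seq bool) (k : nat) : seq bool :=
  mkseq (fun i => nth false s i || (i == k)) (size s + 2).

Lemma size_raise s k : size (raise s k) = (size s + 2)%N.
Proof. exact: size_mkseq. Qed.

Lemma nth_raise s k i :
  nth false (raise s k) i = (nth false s i || (i == k)) && (i < size s + 2)%N.
Proof.
have [lti|lei] := ltnP i (size s + 2); first by rewrite nth_mkseq ?andbT.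
by rewrite nth_default ?size_raise ?andbF.
Qed.

Section Raise.
Variables (s : seq bool) (k : nat).
Hypotheses (ds : is_dyck s) (sk : nth false s k = false) (ks : (k <= size s)%N).

Lemma height_raise x : (x <= size s + 2)%N ->
  height (raise s k) x = height s x + (if (k < x)%N then 2 else 0).
Proof.
elim: x => [|x IH] hx; first by rewrite !height0.
rewrite !heightS IH ?(ltnW hx) // nth_raise hx andbT.
have [->|ne] := eqVneq x k; first by rewrite sk ltnn ltnSn /=; lia.
rewrite orbF; have -> : (k < x.+1)%N = (k < x)%N.
  by rewrite ltnS leq_eqVlt eq_sym (negbTE ne).
by case: (k < x)%N; case: (nth false s x); lia.
Qed.

Lemma raise_dyck : is_dyck (raise s k).
Proof.
have hs := dyck_height_size ds.
apply/andP; split; rewrite size_raise.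
  by apply/eqP; rewrite height_raise // height_size_addn hs ifT; lia.
apply/allP => x; rewrite mem_iota add0n ltnS => /andP[_ hx]; rewrite height_raise //.
have [xs|sx] := leqP x (size s).
  by have := dyck_height_ge0 ds xs; case: ifP => _; lia.
have [d xd] : exists d, x = (size s + d)%N by exists (x - size s)%N; lia.
by subst x; rewrite height_size_addn hs ifT; lia.
Qed.

Lemma raise_shape_sub c : in_shape s c -> in_shape (raise s k) c.
Proof.
case: c => a b; rewrite /in_shape /= size_raise => /and5P[b0 par a0 h4 h5].
rewrite b0 par a0 /=.
by rewrite height_raise; [case: ifP => _; lia | lia].
Qed.

Let new_cell c := in_shape (raise s k) c && ~~ in_shape s c.
(* The cell of column a lying directly on the path s. *)
Let rim (a : nat) : cell := (a%:Z, height s a.+1 + 1).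

Lemma dyck_height_size_succ : height s (size s).+1 = -1.
Proof. by rewrite -addn1 height_size_addn dyck_height_size. Qed.

Lemma height_after_dyck a : (a <= size s)%N -> -1 <= height s a.+1.
Proof.
move=> as_; have [->|lt] := eqVneq a (size s); first by rewrite dyck_height_size_succ.
by apply: le_trans (dyck_height_ge0 ds _); rewrite // ltn_neqAle lt.
Qed.

Lemma new_cell_rim a : (k <= a <= size s)%N -> new_cell (rim a).
Proof.
case/andP=> ka as_; have := height_after_dyck as_; have := height_ups s a.+1.
rewrite /new_cell /in_shape /= size_raise height_raise ?ifT ?ltnS //; lia.
Qed.

Lemma new_cellP c : new_cell c -> exists2 a, (k <= a <= size s)%N & c = rim a.
Proof.
case: c => a b /andP[inR notin].
have [n en] : exists n : nat, a = n%:Z by exists (absz a); move: inR; rewrite /in_shape /=; lia.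
subst a; move: inR notin; rewrite /in_shape /= size_raise => inR notin.
have ns : (n <= size s)%N by lia.
have := height_after_dyck ns; have := height_ups s n.+1.
have : n.+1 = size s -> height s n.+1 = 0 by move=> ->; exact: dyck_height_size.
have : n = size s -> height s n.+1 = -1 by move=> ->; exact: dyck_height_size_succ.
move: inR notin; rewrite height_raise; last lia.
case: ifP => kn inR notin *; last lia.
have := dyck_size_ups ds.
by exists n; [lia | rewrite /rim; congr pair; lia].
Qed.

Lemma rim_adjacent a : adjacent (rim a) (rim a.+1).
Proof. by rewrite /adjacent /=; have := heightS_pm1 s a.+1; lia. Qed.

Lemma raise_ribbon : ribbon new_cell.
Proof.
split; [|split].
- by exists (rim k); apply: new_cell_rim; rewrite leqnn.
- move=> x y /new_cellP[a ha ->] /new_cellP[b hb ->].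
  by apply: chain_linked adjacent_sym _ _ ha hb => [i _|i]; [apply: rim_adjacent | apply: new_cell_rim].
- case=> a [b /and4P[_ /new_cellP[n _ [ea eb]] /new_cellP[m _ [ea' eb']] _]].
  have nm : n = m by lia.
  by subst m; lia.
Qed.

Lemma cover_raise : Defs.cover s (raise s k).
Proof. by split; [|exact: raise_dyck|exact: size_raise|exact: raise_shape_sub|exact: raise_ribbon]. Qed.

End Raise.

Lemma word_le_ups D E x : word_le D E -> (ups D x <= ups E x)%N.
Proof.
move=> DE; elim: x => [|x IH]; first by rewrite !ups0.
by rewrite !upsS; case Dx: (nth false D x); rewrite ?(DE _ Dx); lia.
Qed.

Lemma word_le_size D E :
  is_dyck D -> is_dyck E -> word_le D E -> (size D <= size E)%N.
Proof.
move=> dD dE DE; have := word_le_ups (size D + size E) DE.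
rewrite ups_size_addn addnC ups_size_addn.
by have := dyck_size_ups dD; have := dyck_size_ups dE; lia.
Qed.

Lemma word_le_anti D E :
  is_dyck D -> is_dyck E -> word_le D E -> word_le E D -> D = E.
Proof.
move=> dD dE DE ED.
have nthDE i : nth false D i = nth false E i.
  by apply/idP/idP; [exact: DE | exact: ED].
apply: (eq_from_nth (x0 := false)) => [|i _]; last exact: nthDE.
by apply/eqP; rewrite eqn_leq !word_le_size.
Qed.

Lemma word_le_raise D E k : word_le D E -> nth false E k -> word_le (raise D k) E.
Proof. by move=> DE Ek i; rewrite nth_raise => /andP[/orP[/DE|/eqP->]]. Qed.

Lemma word_le_first_raise D E :
  is_dyck D -> is_dyck E -> word_le D E ->
  (exists k, ~~ nth false D k && nth false E k) ->
  exists k, [/\ nth false D k = false, nth false E k & (k <= size D)%N].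
Proof.
move=> dD dE DE ex; case: (ex_minnP ex) => k /andP[/negbTE Dk Ek] kmin.
exists k; split=> //; rewrite leqNgt; apply/negP => Dlt.
have pre i : (i < k)%N -> nth false D i = nth false E i.
  move=> ik; case Di: (nth false D i); first by rewrite (DE _ Di).
  by apply/esym/negP => Ei; have := kmin i; rewrite Di Ei leqNgt ik => /(_ isT).
have kE : (k < size E)%N.
  by rewrite ltnNge; apply: contraTN Ek => /(nth_default false) ->.
have [d kd] : exists d, k = (size D + d)%N by exists (k - size D)%N; lia.
have := height_eq_prefix pre; rewrite {1}kd height_size_addn dyck_height_size //.
by have := dyck_height_ge0 dE (ltnW kE); lia.
Qed.

Lemma word_le_cover_step D E :
  is_dyck D -> is_dyck E -> word_le D E -> D <> E ->
  exists D', [/\ Defs.cover D D', is_dyck D', word_le D' E & size D' = (size D + 2)%N].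
Proof.
move=> dD dE DE neDE.
have [k [Dk Ek kD]] : exists k, [/\ nth false D k = false, nth false E k & (k <= size D)%N].
  apply: word_le_first_raise => //.
  have [/hasP[k _ DkEk]|/hasPn none] :=
    boolP (has (fun k => ~~ nth false D k && nth false E k) (iota 0 (size E))).
    by exists k.
  case: neDE; apply: word_le_anti => // i Ei; apply/negPn/negP => Di.
  have iE : (i < size E)%N by rewrite ltnNge; apply: contraTN Ei => /(nth_default false) ->.
  by have := none i; rewrite mem_iota iE Di Ei => /(_ isT).
by exists (raise D k); split;
  [exact: cover_raise | exact: raise_dyck | exact: word_le_raise | exact: size_raise].
Qed.

Lemma word_le_dyck_le D E : is_dyck D -> is_dyck E -> word_le D E -> dyck_le D E.
Proof.
move=> dD dE DE; have [n] := ubnP (size E - size D).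
elim: n D dD DE => // n IH D dD DE lt_n.
have [->|/eqP neDE] := eqVneq D E; first exact: rt_refl.
have [D' [cDD' dD' D'E sD']] := word_le_cover_step dD dE DE neDE.
apply: (rt_trans _ _ _ D'); first exact: rt_step.
by apply: IH => //; have := word_le_size dD' dE D'E; lia.
Qed.

Lemma dyck_le_word_le D E : dyck_le D E -> word_le D E.
Proof. by elim=> [x y /cover_word_le | x | x y z _ xy _ yz k /xy /yz]. Qed.

Lemma word_le_dyck_word D E :
  word_le D E <-> (forall i, (1 <= i)%N -> (dyck_word D i <= dyck_word E i)%N).
Proof.
split=> [DE [|i] // _ | H k Dk]; rewrite /dyck_word /=.
  by case Di: (nth false D i); rewrite ?(DE _ Di).
by have := H k.+1 isT; rewrite /dyck_word /= Dk; case: (nth false E k).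
Qed.

Theorem mainTheorem4 (D E : seq bool) :
  is_dyck D -> is_dyck E ->
  (dyck_le D E <-> (forall i : nat, (1 <= i)%N -> (dyck_word D i <= dyck_word E i)%N)).
Proof.
move=> dD dE; rewrite -word_le_dyck_word.
by split; [exact: dyck_le_word_le | exact: word_le_dyck_le].
Qed.
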